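(* Let $n$ be a positive integer and let $\mathcal{H}_{DL;n}$ be the class of decision lists over $n$ Boolean variables. For any $\epsilon\in(2^{-n},1)$, the class $\mathcal{H}_{DL;n}$ is $\left(\min\left\{\frac{1}{200n^4},\epsilon\right\},\epsilon\right)$-separable.
   Context: The domain is $\mathcal{X}=\{0,1\}^n$. A decision list is a function $\mathcal{X}\to\{0,1\}$ of the form ''if $\ell_1$ then $b_1$ else if $\ell_2$ then $b_2$ $\ldots$ else if $\ell_k$ then $b_k$ else $b_{k+1}$'', where $\ell_1,\ldots,\ell_k$ are literals (variables $x_r$ or their negations) over the $n$ variables and $b_1,\ldots,b_{k+1}\in\{0,1\}$; $\mathcal{H}_{DL;n}$ is the set of all such functions. For a class $\mathcal{H}$ over finite domain $\mathcal{X}$, the hypotheses graph is bipartite with parts $\mathcal{H}$ and $\mathcal{X}$, $h$ adjacent to $x$ iff $h(x)=1$. For $S\subseteq\mathcal{X}$, $T\subseteq\mathcal{H}$, $d(S,T)=\frac{e(S,T)}{|S||T|}$ with $e(S,T)$ the number of edges between $S$ and $T$. Hypotheses $h_1,h_2$ are $\epsilon$-close if $|\{x\in\mathcal{X}: h_1(x)\ne h_2(x)\}|\le\epsilon|\mathcal{X}|$; $B_h(\epsilon)$ is the set of hypotheses $\epsilon$-close to $h$. $T\subseteq\mathcal{H}$ is $(\alpha,\epsilon)$-tight if some $h$ has $|T\cap B_h(\epsilon)|\ge\alpha|T|$. $\mathcal{H}$ is $(\alpha,\epsilon)$-separable if for every $T\subseteq\mathcal{H}$ that is not $(\alpha,\epsilon)$-tight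 there exist $S\subseteq\mathcal{X}$ and disjoint $T_0,T_1\subseteq T$ with $|S|\ge\alpha|\mathcal{X}|$, $|T_0|,|T_1|\ge\alpha|T|$ and $|d(S,T_0)-d(S,T_1)|\ge\alpha$. *)

From mathcomp Require Import all_boot all_order all_algebra.
From mathcomp Require Import reals.
Set Implicit Arguments. Unset Strict Implicit. Unset Printing Implicit Defensive.
Import Order.TTheory GRing.Theory Num.Theory.
Local Open Scope ring_scope.

Notation cube n := {ffun 'I_n -> bool}.

Notation hyp X := {ffun X -> bool}.

(* Decision lists: a list of triples (r, s, b), meaning
   "if literal (x_r = s) then b", followed by a default bit.
   Literal (r, true) is x_r, literal (r, false) is the negation of x_r. *)
Definition eval_dl (n : nat) (l : seq ('I_n * bool * bool)) (bd : bool)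
  (x : cube n) : bool :=
  foldr (fun t rest => if x t.1.1 == t.1.2 then t.2 else rest) bd l.

Definition is_DL (n : nat) (h : hyp (cube n)) : Prop :=
  exists (l : seq ('I_n * bool * bool)) (bd : bool), forall x, h x = eval_dl l bd x.

Section Generic.
Variables (R : realType) (X : finType).

Definition edges (S : {set X}) (T : {set hyp X}) : nat :=
  #|[set p : X * hyp X | [&& p.1 \in S, p.2 \in T & p.2 p.1]]|.

Definition density (S : {set X}) (T : {set hyp X}) : R :=
  (edges S T)%:R / (#|S|%:R * #|T|%:R).

Definition eps_close (eps : R) (h1 h2 : hyp X) : bool :=
  (#|[set x : X | h1 x != h2 x]|%:R <= eps * #|X|%:R)%R.

(* T is (alpha,eps)-tight w.r.t. class C: some h in C has
   |T ∩ B_h(eps)| >= alpha |T|, where B_h(eps) = hypotheses of C eps-close to h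
   (T is a subset of C, so intersecting with C is automatic). *)
Definition tight (C : hyp X -> Prop) (alpha eps : R) (T : {set hyp X}) : Prop :=
  exists h, C h /\
    (alpha * #|T|%:R <= #|[set g in T | eps_close eps h g]|%:R)%R.

Definition separable (C : hyp X -> Prop) (alpha eps : R) : Prop :=
  forall T : {set hyp X}, (forall g, g \in T -> C g) ->
    ~ tight C alpha eps T ->
    exists (S : {set X}) (T0 T1 : {set hyp X}),
      [/\ T0 \subset T, T1 \subset T & [disjoint T0 & T1]] /\
      [/\ alpha * #|X|%:R <= #|S|%:R,
          alpha * #|T|%:R <= #|T0|%:R,
          alpha * #|T|%:R <= #|T1|%:R &
          alpha <= `|density S T0 - density S T1| ]%R.
End Generic.

(* Given a family T of decision lists that is not tight, build a decision list p
   literal by literal while keeping a large subfamily G of T whose members agree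
   with p, up to few errors, wherever p fires. On the subcube where p falls
   through, every decision list is constant on the half cut out by one of its
   literals with a free variable, so by pigeonhole a 1/(4n) fraction A of T
   shares such a literal [x_r = s -> b]. If an a-fraction E of T errs on an
   a-fraction of that half S, then on S the density of A is b while that of E is
   a away from b, so S, A, E separate T. Otherwise append the literal, drop E
   from G and recurse on the other half. Once the subcube is smaller than an
   a-fraction of the cube, one more literal and a majority default make p into a
   hypothesis that is eps-close to a 1/(8n) fraction of G, so T is tight. *)

From mathcomp Require Import all_boot all_order all_algebra.
From mathcomp Require Import reals.
From mathcomp Require Import lra zify.
Set Implicit Arguments. Unset Strict Implicit. Unset Printing Implicit Defensive.
Import Order.TTheory GRing.Theory Num.Theory.
Local Open Scope ring_scope.

Lemma pigeonhole_set (T K : finType) (k0 : K) (A : {set T}) (P : T -> K -> bool) :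
  (forall g, g \in A -> exists k, P g k) ->
  exists k, (#|A| <= #|K| * #|[set g in A | P g k]|)%N.
Proof.
move=> AP.
have cover : (#|A| <= \sum_k #|[set g in A | P g k]|)%N.
  rewrite -sum1_card (@leq_trans (\sum_(g in A) \sum_k P g k)) //.
    by apply: leq_sum => g /AP[k Pk]; rewrite (bigD1 k) //= Pk.
  rewrite exchange_big leq_sum // => k _.
  rewrite -sum1_card big_mkcond [leqRHS]big_mkcond leq_sum // => g _.
  by rewrite inE; case: (g \in A); case: (P g k).
have [k _ kmax] := @arg_maxnP K k0 xpredT (fun k => #|[set g in A | P g k]|) isT.
exists k; apply: leq_trans cover _.
by rewrite -sum_nat_const leq_sum // => j _; apply: kmax.
Qed.

Section Densities.
Variables (R : realType) (X : finType).
Implicit Types (S : {set X}) (T : {set hyp X}) (g : hyp X).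

Definition mistakes S (b : bool) g := #|[set x in S | g x != b]|.

Lemma mistakes_eq0P S b g : reflect {in S, forall x, g x = b} (mistakes S b g == 0%N).
Proof.
rewrite cards_eq0; apply: (iffP eqP) => [S0 x xS | gb].
  by apply/eqP/negbFE; move/setP/(_ x): S0; rewrite !inE xS.
by apply/setP => x; rewrite !inE; case xS: (x \in S); rewrite // gb ?eqxx.
Qed.

Lemma mistakes_false S g : mistakes S false g = #|[set x in S | g x]|.
Proof. by apply: eq_card => x; rewrite !inE; case: (g x). Qed.

Lemma mistakes_true_false S g : (mistakes S true g + mistakes S false g)%N = #|S|.
Proof.
rewrite -(cardsID [set x | g x] S) addnC; congr (_ + _)%N;
  by apply: eq_card => x; rewrite !inE; case: (g x); rewrite ?andbT ?andbF.
Qed.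

Lemma mistakes_majority S g : exists b, (2 * mistakes S b g <= #|S|)%N.
Proof.
have := mistakes_true_false S g.
case: (leqP (mistakes S true g) (mistakes S false g)) => ?; [exists true | exists false]; lia.
Qed.

Lemma edges_sum S T : edges S T = \sum_(g in T) #|[set x in S | g x]|.
Proof.
rewrite /edges -sum1_card (partition_big snd (fun g => g \in T)) => [|[x g]]; last first.
  by rewrite inE => /and3P[].
apply: eq_bigr => g gT; rewrite -sum1_card.
rewrite (reindex (fun x => (x, g))) /=.
  by apply: eq_bigl => x; rewrite !inE /= gT eqxx !andbT.
by exists fst => [x|[x h]]; rewrite ?inE //= => /andP[_ /eqP->].
Qed.

Section Bounds.
Variables (S : {set X}) (T : {set hyp X}) (c : R).
Hypotheses (S_gt0 : (0 < #|S|)%N) (T_gt0 : (0 < #|T|)%N).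

Let ST_gt0 : 0 < #|S|%:R * #|T|%:R :> R.
Proof. by rewrite mulr_gt0 ?ltr0n. Qed.

Let sum_const_c : c * (#|S|%:R * #|T|%:R) = \sum_(g in T) c * #|S|%:R.
Proof. by rewrite sumr_const -[RHS]mulr_natr mulrA. Qed.

Lemma density_ge : (forall g, g \in T -> c * #|S|%:R <= #|[set x in S | g x]|%:R) ->
  c <= density R S T.
Proof.
move=> ones_ge; rewrite /density ler_pdivlMr // sum_const_c edges_sum natr_sum.
exact: ler_sum.
Qed.

Lemma density_le : (forall g, g \in T -> #|[set x in S | g x]|%:R <= c * #|S|%:R) ->
  density R S T <= c.
Proof.
move=> ones_le; rewrite /density ler_pdivrMr // sum_const_c edges_sum natr_sum.
exact: ler_sum.
Qed.

End Bounds.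

Lemma separation_of_constant (S : {set X}) (A E : {set hyp X}) (b : bool) (a : R) :
  0 < a -> (0 < #|S|)%N -> (0 < #|A|)%N -> (0 < #|E|)%N ->
  (forall g, g \in A -> mistakes S b g = 0%N) ->
  (forall g, g \in E -> a * #|S|%:R <= (mistakes S b g)%:R) ->
  [disjoint A & E] /\ a <= `|density R S A - density R S E|.
Proof.
move=> a_gt0 S_gt0 A_gt0 E_gt0 A_const E_far; split.
  apply/pred0P => g /=; apply/negP => /andP[/A_const g0 /E_far].
  by rewrite g0 leNgt mulr_gt0 ?ltr0n.
have split_S g : (mistakes S true g)%:R + (mistakes S false g)%:R = #|S|%:R :> R.
  by rewrite -natrD mistakes_true_false.
case: b A_const E_far => A_const E_far; rewrite ler_normr; apply/orP.
- have dA : 1 <= density R S A.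
    apply: density_ge => // g /A_const g0; rewrite -mistakes_false mul1r.
    by rewrite -(split_S g) g0 add0r.
  have dE : density R S E <= 1 - a.
    apply: density_le => // g /E_far far; rewrite -mistakes_false.
    by have := split_S g; lra.
  by left; lra.
- have dA : density R S A <= 0.
    by apply: density_le => // g /A_const g0; rewrite -mistakes_false g0 mul0r.
  have dE : a <= density R S E.
    by apply: density_ge => // g /E_far; rewrite -mistakes_false.
  by right; lra.
Qed.

End Densities.

Section DecisionLists.
Variable n : nat.
Local Notation X := (cube n).
Local Notation literal := ('I_n * bool * bool)%type.
Implicit Types (p l : seq literal) (x : X) (g : hyp X) (C : {set X}) (F : {set 'I_n}).

Definition falls_through p x := all (fun t : literal => x t.1.1 != t.1.2) p.

Definition fallthrough p : {set X} := [set x | falls_through p x].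

Lemma fallthrough_nil : fallthrough [::] = [set: X].
Proof. by apply/setP => x; rewrite !inE. Qed.

Lemma falls_through_rcons p r s b x :
  falls_through (rcons p (r, s, b)) x = falls_through p x && (x r != s).
Proof. by rewrite /falls_through -cats1 all_cat /= andbT. Qed.

Lemma fallthrough_rcons p r s b :
  fallthrough (rcons p (r, s, b)) = [set x in fallthrough p | x r != s].
Proof. by apply/setP => x; rewrite !inE falls_through_rcons. Qed.

Lemma eval_dl_rcons p t bd x :
  eval_dl (rcons p t) bd x = eval_dl p (eval_dl [:: t] bd x) x.
Proof. by rewrite -cats1 /eval_dl foldr_cat. Qed.

Lemma eval_dl_falls_through p bd x : falls_through p x -> eval_dl p bd x = bd.
Proof. by elim: p => //= t p IH /andP[/negbTE -> /IH]. Qed.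

Lemma eval_dl_fired p bd bd' x :
  ~~ falls_through p x -> eval_dl p bd x = eval_dl p bd' x.
Proof.
elim: p => //= t p IH; rewrite negb_and negbK.
by case: (x t.1.1 == t.1.2) => //= /IH ->.
Qed.

Definition prefix_errors p g :=
  #|[set x | (x \notin fallthrough p) && (g x != eval_dl p false x)]|.

Lemma prefix_errors_nil g : prefix_errors [::] g = 0%N.
Proof. by apply/eqP; rewrite cards_eq0; apply/eqP/setP => x; rewrite !inE. Qed.

Lemma prefix_errors_rcons p r s b g :
  (prefix_errors (rcons p (r, s, b)) g <=
   prefix_errors p g + mistakes [set x in fallthrough p | x r == s] b g)%N.
Proof.
apply: leq_trans (leq_card_setU _ _); apply/subset_leq_card/subsetP => x.
rewrite !inE falls_through_rcons eval_dl_rcons negb_and negbK /=.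
case fx: (falls_through p x) => /=.
  by rewrite eval_dl_falls_through //; case: (x r == s).
by rewrite orbF (@eval_dl_fired _ _ false) ?fx.
Qed.

Lemma card_dl_disagree p bd g :
  (#|[set x | eval_dl p bd x != g x]| <=
   prefix_errors p g + mistakes (fallthrough p) bd g)%N.
Proof.
apply: leq_trans (leq_card_setU _ _); apply/subset_leq_card/subsetP => x.
rewrite !inE eq_sym; case fx: (falls_through p x) => /=; first by rewrite eval_dl_falls_through.
by rewrite orbF (@eval_dl_fired _ _ false) ?fx.
Qed.

Definition flip (r : 'I_n) x : X := [ffun i => if i == r then ~~ x i else x i].

Lemma flipK r : involutive (flip r).
Proof. by move=> x; apply/ffunP => i; rewrite !ffunE; case: eqP => // _; rewrite negbK. Qed.

Record subcube C F : Prop := Subcube {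
  subcube_flip : forall x r, r \in F -> (flip r x \in C) = (x \in C);
  subcube_fixed : forall x y r, x \in C -> y \in C -> r \notin F -> x r = y r }.

Lemma subcube_setT : subcube [set: X] [set: 'I_n].
Proof. by split=> [x r _ | x y r _ _]; rewrite ?inE. Qed.

Lemma subcube_split C F r s :
  subcube C F -> r \in F -> subcube [set x in C | x r != s] (F :\ r).
Proof.
move=> [Cflip Cfixed] rF; split=> [x i | x y i].
  by rewrite in_setD1 eq_sym => /andP[/negbTE ri iF]; rewrite !inE Cflip // ffunE ri.
rewrite !inE negb_and negbK => /andP[xC xr] /andP[yC yr] /orP[/eqP-> | iF].
  by move: xr yr; case: (x r); case: (y r); case: s.
exact: Cfixed.
Qed.

Lemma card_subcube_split C F r s : subcube C F -> r \in F ->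
  #|[set x in C | x r == s]| = #|[set x in C | x r != s]|.
Proof.
move=> [Cflip _] rF.
have -> : [set x in C | x r != s] = flip r @: [set x in C | x r == s].
  apply/setP => y; apply/idP/imsetP.
  - rewrite inE => /andP[yC ys]; exists (flip r y); last by rewrite flipK.
    by rewrite inE Cflip // yC ffunE eqxx; case: s ys; case: (y r).
  - case=> x; rewrite !inE => /andP[xC /eqP xs] ->.
    by rewrite Cflip // xC ffunE eqxx xs; case: s {xs}.
by rewrite card_imset //; apply: (can_inj (flipK r)).
Qed.

Lemma card_subcube_double C F r s : subcube C F -> r \in F ->
  #|C| = (2 * #|[set x in C | x r != s]|)%N.
Proof.
move=> Csub rF; rewrite -(cardsID [set x : X | x r == s] C).
rewrite (_ : C :&: _ = [set x in C | x r == s]); last by apply/setP => x; rewrite !inE.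
rewrite (_ : C :\: _ = [set x in C | x r != s]); last by apply/setP => x; rewrite !inE andbC.
by rewrite (card_subcube_split s Csub rF) mul2n addnn.
Qed.

Lemma dl_literal_decides C F r0 l bd : subcube C F -> r0 \in F ->
  exists2 t : literal, t.1.1 \in F &
    forall x, x \in C -> x t.1.1 = t.1.2 -> eval_dl l bd x = t.2.
Proof.
move=> [_ Cfixed] r0F; elim: l => [|[[r s] b] l [t tF tdec]]; first by exists (r0, true, bd).
rewrite /eval_dl /=; case rF: (r \in F); first by exists (r, s, b) => //= x _ ->; rewrite eqxx.
(* A literal on a fixed variable fires on all of C or on none of it. *)
case: (pickP [pred y | (y \in C) && (y r == s)]) => [y /andP[yC /eqP ys] | no_y].
  by exists (r0, true, b) => //= x xC _; rewrite (Cfixed x y r) ?rF // ys eqxx.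
exists t => // x xC xt; move: (no_y x); rewrite /= xC /= => ->; exact: tdec.
Qed.

Definition decides C F g (t : literal) :=
  let: (r, s, b) := t in (r \in F) && (mistakes [set x in C | x r == s] b g == 0%N).

Lemma DL_decides C F r0 g : is_DL g -> subcube C F -> r0 \in F ->
  exists t, decides C F g t.
Proof.
move=> [l [bd gE]] Csub r0F; have [t tF tdec] := dl_literal_decides l bd Csub r0F.
exists t; case: t tF tdec => [[r s] b] /= rF tdec; rewrite rF; apply/mistakes_eq0P => x.
by rewrite inE gE => /andP[xC /eqP]; apply: tdec.
Qed.

Definition splits C g (u : literal * bool) :=
  let: (r, s, c, be) := u in
  (mistakes [set x in C | x r == s] c g == 0%N) &&
  (4 * mistakes [set x in C | x r != s] be g <= #|C|)%N.

Lemma DL_splits C F (r0 : 'I_n) g : is_DL g -> subcube C F -> C != set0 ->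
  exists u, splits C g u.
Proof.
move=> gDL Csub /set0Pn[x0 x0C]; case: (set_0Vmem F) => [F0 | [r1 r1F]].
  have Cx0 x : x \in C -> x = x0.
    by move=> xC; apply/ffunP => i; apply: (subcube_fixed Csub) => //; rewrite F0 inE.
  exists (r0, x0 r0, g x0, true); apply/andP; split.
    by apply/mistakes_eq0P => x; rewrite inE => /andP[/Cx0 ->].
  suff /eqP -> : mistakes [set x in C | x r0 != x0 r0] true g == 0%N by [].
  by apply/mistakes_eq0P => x; rewrite inE => /andP[/Cx0 ->]; rewrite eqxx.
have [[[r s] c] /= /andP[rF dec]] := DL_decides gDL Csub r1F.
have [be half] := mistakes_majority [set x in C | x r != s] g.
exists (r, s, c, be); rewrite /= dec /= (card_subcube_double s Csub rF).
by rewrite -[4%N]/(2 * 2)%N -mulnA leq_mul2l half orbT.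
Qed.

End DecisionLists.

Section Separation.
Variables (R : realType) (n : nat) (a eps : R) (T : {set hyp (cube n)}).
Local Notation X := (cube n).
Local Notation H := (hyp (cube n)).
Hypotheses (n_gt0 : (0 < n)%N) (a_gt0 : 0 < a) (a_le_eps : a <= eps)
  (a_small : 36 * n%:R ^+ 2 * a <= 1)
  (T_DL : forall g, g \in T -> is_DL g) (T_gt0 : (0 < #|T|)%N).

Definition separated := exists (S : {set X}) (T0 T1 : {set H}),
  [/\ T0 \subset T, T1 \subset T & [disjoint T0 & T1]] /\
  [/\ a * #|X|%:R <= #|S|%:R, a * #|T|%:R <= #|T0|%:R,
      a * #|T|%:R <= #|T1|%:R & a <= `|density R S T0 - density R S T1|].

Lemma card_cube : #|X| = (2 ^ n)%N.
Proof. by rewrite card_ffun card_bool card_ord. Qed.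

Lemma four_n_a_le1 : 4 * n%:R * a <= 1.
Proof.
have n2a_ge0 : 0 <= n%:R ^+ 2 * a by rewrite mulr_ge0 ?exprn_ge0 // ltW.
have na_le : n%:R * a <= n%:R ^+ 2 * a.
  by rewrite expr2 -mulrA ler_peMl ?ler1n ?mulr_ge0 // ltW.
have := a_small; lra.
Qed.

Lemma exp2_pred : 2 ^+ n = 2 * 2 ^+ n.-1 :> R.
Proof. by rewrite -exprS prednK. Qed.

Lemma gt0_of_share m k : (0 < k)%N -> a * k%:R <= m%:R -> (0 < m)%N.
Proof.
by move=> k_gt0 le; rewrite -(ltr0n R); apply: lt_le_trans le; rewrite mulr_gt0 ?ltr0n.
Qed.

Lemma separated_of_constant (S : {set X}) (A E : {set H}) b :
  A \subset T -> E \subset T -> a * #|X|%:R <= #|S|%:R ->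
  a * #|T|%:R <= #|A|%:R -> a * #|T|%:R <= #|E|%:R ->
  (forall g, g \in A -> mistakes S b g = 0%N) ->
  (forall g, g \in E -> a * #|S|%:R <= (mistakes S b g)%:R) -> separated.
Proof.
move=> AT ET S_big A_big E_big A_const E_far.
have X_gt0 : (0 < #|X|)%N by rewrite card_cube expn_gt0.
have [disj dens] := separation_of_constant a_gt0 (gt0_of_share X_gt0 S_big)
  (gt0_of_share T_gt0 A_big) (gt0_of_share T_gt0 E_big) A_const E_far.
by exists S, A, E.
Qed.

Lemma popular_literal C F r0 : subcube C F -> r0 \in F ->
  exists r s b, r \in F /\
    #|T|%:R <= 4 * n%:R * #|[set g in T | decides C F g (r, s, b)]|%:R :> R.
Proof.
move=> Csub r0F.
have [[[r s] b] A_big] := pigeonhole_set (r0, true, true)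
  (fun g gT => DL_decides (T_DL gT) Csub r0F).
rewrite !card_prod card_ord card_bool in A_big.
have A_gt0 : (0 < #|[set g in T | decides C F g (r, s, b)]|)%N.
  by rewrite lt0n; apply: contraTneq A_big => ->; rewrite muln0 -ltnNge.
exists r, s, b; split; last first.
  by rewrite -!natrM ler_nat; move: A_big; set k := #|[set g in T | _]|; lia.
by case/card_gt0P: A_gt0 => g; rewrite inE /= => /and3P[].
Qed.

Lemma share_of_popular (A : {set H}) :
  #|T|%:R <= 4 * n%:R * #|A|%:R :> R -> a * #|T|%:R <= #|A|%:R.
Proof.
move=> le; apply: le_trans (ler_wpM2l (ltW a_gt0) le) _.
by rewrite mulrA ler_piMl // mulrC four_n_a_le1.
Qed.

(* Stage d of the construction: p falls through exactly on a subcube of dimension d.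
   Each round drops fewer than a|T| members of G and adds fewer than a 2^(d-1) errors;
   the first round, which reaches d = n - 1, adds none. *)
Definition good_prefix (d : nat) := exists p (F : {set 'I_n}) (G : {set H}),
  [/\ subcube (fallthrough p) F, #|F| = d, #|fallthrough p| = (2 ^ d)%N, G \subset T &
      #|T|%:R <= 4 * n%:R * (#|G|%:R + a * #|T|%:R * (n%:R - d%:R))] /\
  forall g, g \in G -> (prefix_errors p g)%:R <= a * (2 ^+ n.-1 - 2 ^+ d).

Lemma good_prefix_init : good_prefix n.-1.
Proof.
pose r0 : 'I_n := Ordinal n_gt0.
have [r [s [b [_ A_big]]]] := popular_literal (subcube_setT n) (in_setT r0).
set A := [set g in T | _] in A_big.
have C1 : fallthrough [:: (r, s, b)] = [set x in [set: X] | x r != s].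
  by rewrite -fallthrough_nil -(fallthrough_rcons [::] r s b).
exists [:: (r, s, b)], ([set: 'I_n] :\ r), A; split; first split.
- by rewrite C1; apply: subcube_split (subcube_setT n) _.
- by have := cardsD1 r [set: 'I_n]; rewrite cardsT card_ord inE; lia.
- apply/eqP; rewrite -(eqn_pmul2l (isT : 0 < 2)%N) -expnS prednK // -card_cube.
  by rewrite C1 -cardsT (card_subcube_double s (subcube_setT n) (in_setT r)).
- by apply/subsetP => g; rewrite inE => /andP[].
- apply: le_trans A_big _; rewrite ler_wpM2l ?mulr_ge0 ?ler0n // lerDl.
  by rewrite !mulr_ge0 ?ler0n ?(ltW a_gt0) // subr_ge0 ler_nat leq_pred.
move=> g; rewrite inE /= => /and3P[_ _ /eqP A0].
have := prefix_errors_rcons [::] r s b g.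
by rewrite prefix_errors_nil fallthrough_nil A0 /= leqn0 => /eqP ->; rewrite subrr mulr0.
Qed.

Lemma good_prefix_step d : good_prefix d -> (0 < d)%N -> a * 2 ^+ n <= 2 ^+ d.-1 ->
  separated \/ good_prefix d.-1.
Proof.
move=> [p [F [G [[Csub Fd Cd GT T_le] G_err]]]] d_gt0 S_big.
have /card_gt0P[r0 r0F] : (0 < #|F|)%N by rewrite Fd.
have [r [s [b [rF A_big]]]] := popular_literal Csub r0F.
set A := [set g in T | _] in A_big.
set S := [set x in fallthrough p | x r == s].
have half_card : #|[set x in fallthrough p | x r != s]| = (2 ^ d.-1)%N.
  apply/eqP; rewrite -(eqn_pmul2l (isT : 0 < 2)%N) -expnS prednK // -Cd.
  by rewrite (card_subcube_double s Csub rF).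
have S_card : #|S| = (2 ^ d.-1)%N by rewrite (card_subcube_split s Csub rF).
set E := [set g in T | a * #|S|%:R <= (mistakes S b g)%:R].
have [E_big | E_small] := lerP (a * #|T|%:R) #|E|%:R.
  left; apply: (@separated_of_constant S A E b) => //.
  - by apply/subsetP => g; rewrite inE => /andP[].
  - by apply/subsetP => g; rewrite inE => /andP[].
  - by rewrite card_cube S_card !natrX.
  - exact: share_of_popular.
  - by move=> g; rewrite inE /= => /and3P[_ _ /eqP].
  - by move=> g; rewrite inE => /andP[].
right; exists (rcons p (r, s, b)), (F :\ r), (G :\: E); rewrite fallthrough_rcons.
split; first split.
- exact: subcube_split.
- by move: Fd; rewrite (cardsD1 r F) rF add1n => <-.
- exact: half_card.
- by apply: subset_trans GT; apply: subsetDl.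
- have G_split : #|G|%:R <= #|E|%:R + #|G :\: E|%:R :> R.
    by rewrite -natrD ler_nat -(cardsID E G) leq_add2r subset_leq_card // subsetIr.
  have d_pred : d%:R = d.-1%:R + 1 :> R by rewrite natr1 prednK.
  apply: le_trans T_le _; rewrite ler_wpM2l ?mulr_ge0 ?ler0n // d_pred.
  by move: E_small G_split; lra.
move=> g; rewrite inE => /andP[gE gG].
have mis_small : (mistakes S b g)%:R < a * (2 ^+ d.-1).
  by move: gE; rewrite inE (subsetP GT g gG) /= -ltNge S_card natrX.
have := prefix_errors_rcons p r s b g; rewrite -/S -(ler_nat R) natrD.
have := G_err g gG; rewrite -[in 2 ^+ d](prednK d_gt0) exprS.
by move: mis_small; lra.
Qed.

Definition stopped d := d = 0%N \/ 2 ^+ d.-1 < a * 2 ^+ n.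

Lemma good_prefix_descent d : good_prefix d ->
  separated \/ exists2 d', good_prefix d' & stopped d'.
Proof.
elim: d => [|d IH] gd; first by right; exists 0%N => //; left.
have [S_big | S_small] := lerP (a * 2 ^+ n) (2 ^+ d.+1.-1).
  by case: (good_prefix_step gd (ltn0Sn d) S_big) => [|/IH]; [left|].
by right; exists d.+1 => //; right.
Qed.

Lemma quarter_le_of_stopped d m : stopped d ->
  (4 * m <= 2 ^ d)%N -> m%:R <= a * 2 ^+ n.-1.
Proof.
case: d => [_ | d [//|small]] le.
  have -> : m = 0%N by move: le; rewrite expn0; lia.
  by rewrite mulr_ge0 ?exprn_ge0 // ltW.
have := le; rewrite -(ler_nat R) natrM natrX exprS.
by move: small; rewrite exp2_pred; lra.
Qed.

Lemma eps_close_extension d (p : seq ('I_n * bool * bool)) r s c be (g : H) :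
  (prefix_errors p g)%:R <= a * (2 ^+ n.-1 - 2 ^+ d) ->
  mistakes [set x in fallthrough p | x r == s] c g = 0%N ->
  (mistakes [set x in fallthrough p | x r != s] be g)%:R <= a * 2 ^+ n.-1 ->
  eps_close eps [ffun x => eval_dl (rcons p (r, s, c)) be x] g.
Proof.
move=> p_err dec rest.
have disagree : (#|[set x | [ffun x => eval_dl (rcons p (r, s, c)) be x] x != g x]| <=
                 prefix_errors p g + mistakes [set x in fallthrough p | x r != s] be g)%N.
  rewrite (eq_card (B := [set x | eval_dl (rcons p (r, s, c)) be x != g x])) => [|x];
    last by rewrite !inE ffunE.
  apply: leq_trans (card_dl_disagree _ _ _) _; rewrite fallthrough_rcons leq_add2r.
  by have := prefix_errors_rcons p r s c g; rewrite dec addn0.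
rewrite /eps_close card_cube natrX; apply: le_trans (_ : a * 2 ^+ n <= _).
  move: disagree; rewrite -(ler_nat R) natrD exp2_pred.
  have : 0 <= a * 2 ^+ d by rewrite mulr_ge0 ?exprn_ge0 // ltW.
  by move: p_err rest; lra.
by rewrite ler_wpM2r ?exprn_ge0.
Qed.

Lemma share_of_twice_popular (G G2 : {set H}) d :
  (#|G| <= 8 * n * #|G2|)%N ->
  #|T|%:R <= 4 * n%:R * (#|G|%:R + a * #|T|%:R * (n%:R - d%:R)) ->
  a * #|T|%:R <= #|G2|%:R.
Proof.
move=> G_le T_le; have T_ge0 : 0 <= #|T|%:R :> R by [].
have atd : 0 <= n%:R * (a * #|T|%:R * d%:R) :> R by rewrite !mulr_ge0 // ltW.
have G_le' : 4 * n%:R * #|G|%:R <= 4 * n%:R * (8 * n%:R * #|G2|%:R) :> R.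
  by rewrite ler_wpM2l ?mulr_ge0 // -!natrM ler_nat.
have aT := ler_wpM2r T_ge0 a_small; rewrite mul1r in aT.
have : 32 * n%:R ^+ 2 * (a * #|T|%:R) <= 32 * n%:R ^+ 2 * #|G2|%:R.
  by move: T_le; lra.
by rewrite ler_pM2l // mulr_gt0 // exprn_gt0 // ltr0n.
Qed.

Lemma tight_of_good_prefix d : good_prefix d -> stopped d ->
  tight (@is_DL n) a eps T.
Proof.
move=> [p [F [G [[Csub Fd Cd GT T_le] G_err]]]] small.
pose r0 : 'I_n := Ordinal n_gt0.
have C_n0 : fallthrough p != set0 by rewrite -card_gt0 Cd expn_gt0.
have G_split g : g \in G -> exists u, splits (fallthrough p) g u.
  by move=> gG; exact: (DL_splits r0 (T_DL (subsetP GT g gG)) Csub C_n0).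
have [[[[r s] c] be] G2_big] := pigeonhole_set (r0, true, true, true) G_split.
set G2 := [set g in G | _] in G2_big.
exists [ffun x => eval_dl (rcons p (r, s, c)) be x]; split.
  by exists (rcons p (r, s, c)), be => x; rewrite ffunE.
apply: le_trans (_ : #|G2|%:R <= _).
  apply: share_of_twice_popular T_le.
  by rewrite !card_prod card_ord !card_bool in G2_big; move: G2_big; set k := #|G2|; lia.
rewrite ler_nat subset_leq_card //; apply/subsetP => g.
rewrite !inE /= => /andP[gG /andP[/eqP dec quarter]].
rewrite (subsetP GT g gG); apply: eps_close_extension (G_err g gG) dec _.
by apply: quarter_le_of_stopped small _; rewrite -Cd.
Qed.

Lemma separated_of_not_tight : ~ tight (@is_DL n) a eps T -> separated.
Proof.
move=> not_tight; have [//|[d gd small]] := good_prefix_descent good_prefix_init.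
by case: not_tight; apply: tight_of_good_prefix gd small.
Qed.

End Separation.

Lemma DL_separable (R : realType) n (a eps : R) :
  (0 < n)%N -> 0 < a -> a <= eps -> 36 * n%:R ^+ 2 * a <= 1 ->
  separable (@is_DL n) a eps.
Proof.
move=> n_gt0 a_gt0 a_le_eps a_small T T_DL not_tight.
have T_gt0 : (0 < #|T|)%N.
  rewrite card_gt0; apply: contra_notN not_tight => /eqP ->.
  exists [ffun=> false]; split; last by rewrite cards0 mulr0.
  by exists [::], false => x; rewrite ffunE.
exact: (separated_of_not_tight n_gt0 a_gt0 a_le_eps a_small T_DL T_gt0 not_tight).
Qed.

Theorem theorem8 (R : realType) (n : nat) (eps : R) :
  (0 < n)%N -> (2 : R) ^- n < eps -> eps < 1 ->
  separable (@is_DL n) (Num.min (1 / (200 * (n%:R) ^+ 4)) eps) eps.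
Proof.
move=> n_gt0 eps_gt _; have n_ge1 : 1 <= n%:R :> R by rewrite ler1n.
have eps_gt0 : 0 < eps by apply: lt_trans eps_gt; rewrite invr_gt0 exprn_gt0.
have bound_gt0 : 0 < 200 * n%:R ^+ 4 :> R by rewrite mulr_gt0 // exprn_gt0 // ltr0n.
apply: DL_separable => //.
- by rewrite lt_min eps_gt0 divr_gt0.
- by rewrite ge_min lexx orbT.
apply: le_trans (_ : 36 * n%:R ^+ 2 * (1 / (200 * n%:R ^+ 4)) <= 1).
  by rewrite ler_wpM2l ?mulr_ge0 ?exprn_ge0 // ge_min lexx.
rewrite mul1r ler_pdivrMr // mul1r.
have n2_ge1 : 1 <= n%:R ^+ 2 :> R by rewrite exprn_ege1.
have -> : n%:R ^+ 4 = n%:R ^+ 2 * n%:R ^+ 2 :> R by rewrite -exprD.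
nra.
Qed.
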